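(* Equip $\mathbb{R}^{1,1}$ with the Minkowski inner product $x\cdot y=-x_0y_0+x_1y_1$, let $O$ be the origin, and for $\theta_1,\theta_2\in\mathbb{R}$ let $P_i=(\sinh\theta_i,\cosh\theta_i)$, $i=1,2$, be points on the branch $x_1>0$ of the hyperbola $-x_0^2+x_1^2=1$. Then the vectors $OP_1$ and $OP_2$ are spacelike and the pseudo-angle $\Theta$ between them satisfies $\cosh^2(\Theta)=\cosh^2(\theta_1-\theta_2)$, i.e. $\Theta=|\theta_1-\theta_2|$. Consequently, for any $\theta_0\in\mathbb{R}$ with $\theta_0\neq\theta_1,\theta_2$ and $P_0=(\sinh\theta_0,\cosh\theta_0)$, $\Theta$ is twice the pseudo-angle between the chords $P_0P_1$ and $P_0P_2$, the latter being $\frac{|\theta_1-\theta_2|}{2}$.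
   Context: A vector $x\in\mathbb{R}^{1,1}$ is timelike if $x\cdot x<0$ and spacelike if $x\cdot x>0$. For two vectors $x,y$ that are both timelike or both spacelike, the pseudo-angle $\theta\ge 0$ between them is defined by $\cosh^2(\theta)=\frac{(x\cdot y)^2}{(x\cdot x)(y\cdot y)}$. The pseudo-angle between two chords is the pseudo-angle between their direction vectors. *)

From Stdlib Require Import Reals Lra.
Open Scope R_scope.

Definition vec := (R * R)%type.

Definition mdot (x y : vec) : R := - fst x * fst y + snd x * snd y.

Definition timelike (x : vec) : Prop := mdot x x < 0.
Definition spacelike (x : vec) : Prop := mdot x x > 0.

Definition vsub (p q : vec) : vec := (fst p - fst q, snd p - snd q).

Definition is_pseudo_angle (x y : vec) (theta : R) : Prop :=
  ((timelike x /\ timelike y) \/ (spacelike x /\ spacelike y)) /\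
  0 <= theta /\
  (cosh theta) ^ 2 = (mdot x y) ^ 2 / (mdot x x * mdot y y).

Definition hpt (t : R) : vec := (sinh t, cosh t).

Definition origin : vec := (0, 0).

(* Points of the hyperbola are parametrised so that the Minkowski product of
   P_a and P_b is cosh (a - b), the hyperbolic subtraction formula.  For the
   chords from P_c, the sum-to-product formulas give
   P_a - P_c = 2 sinh ((a - c)/2) (cosh ((a + c)/2), sinh ((a + c)/2)), so the
   chords are timelike and their product is
   -4 sinh ((a - c)/2) sinh ((b - c)/2) cosh ((a - b)/2).  Hence the
   ratio defining the pseudo-angle is cosh^2 (a - b) for OP_a, OP_b and
   cosh^2 ((a - b)/2) for the chords; since cosh is positive and injective on
   [0, +oo), the pseudo-angles are |a - b| and |a - b|/2, a Minkowski
   inscribed angle theorem. *)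
From Stdlib Require Import Reals Lra Psatz.
Open Scope R_scope.

Lemma cosh_plus (x y : R) : cosh (x + y) = cosh x * cosh y + sinh x * sinh y.
Proof.
  unfold cosh, sinh; rewrite Ropp_plus_distr, !exp_plus, !exp_Ropp.
  field; split; apply Rgt_not_eq, exp_pos.
Qed.

Lemma sinh_plus (x y : R) : sinh (x + y) = sinh x * cosh y + cosh x * sinh y.
Proof.
  unfold cosh, sinh; rewrite Ropp_plus_distr, !exp_plus, !exp_Ropp.
  field; split; apply Rgt_not_eq, exp_pos.
Qed.

Lemma cosh_opp (x : R) : cosh (- x) = cosh x.
Proof. unfold cosh; rewrite Ropp_involutive; lra. Qed.

Lemma sinh_opp (x : R) : sinh (- x) = - sinh x.
Proof. unfold sinh; rewrite Ropp_involutive; lra. Qed.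

Lemma cosh_minus (x y : R) : cosh (x - y) = cosh x * cosh y - sinh x * sinh y.
Proof. unfold Rminus; rewrite cosh_plus, cosh_opp, sinh_opp; ring. Qed.

Lemma sinh_minus (x y : R) : sinh (x - y) = sinh x * cosh y - cosh x * sinh y.
Proof. unfold Rminus; rewrite sinh_plus, cosh_opp, sinh_opp; ring. Qed.

Lemma cosh_sub_cosh (a c : R) :
  cosh a - cosh c = 2 * sinh ((a + c) / 2) * sinh ((a - c) / 2).
Proof.
  set (x := (a + c) / 2); set (y := (a - c) / 2).
  replace a with (x + y) by (unfold x, y; field).
  replace c with (x - y) by (unfold x, y; field).
  rewrite cosh_plus, cosh_minus; ring.
Qed.

Lemma sinh_sub_sinh (a c : R) :
  sinh a - sinh c = 2 * cosh ((a + c) / 2) * sinh ((a - c) / 2).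
Proof.
  set (x := (a + c) / 2); set (y := (a - c) / 2).
  replace a with (x + y) by (unfold x, y; field).
  replace c with (x - y) by (unfold x, y; field).
  rewrite sinh_plus, sinh_minus; ring.
Qed.

Lemma sinh_pos (x : R) : 0 < x -> 0 < sinh x.
Proof. intros Hx; rewrite <- sinh_0; exact (sinh_lt _ _ Hx). Qed.

Lemma sinh_neq_0 (x : R) : x <> 0 -> sinh x <> 0.
Proof.
  intros Hx; destruct (Rdichotomy _ _ Hx) as [Hneg | Hpos].
  - rewrite <- (Ropp_involutive x), sinh_opp.
    assert (0 < sinh (- x)) by (apply sinh_pos; lra); lra.
  - assert (0 < sinh x) by (apply sinh_pos; lra); lra.
Qed.

Lemma cosh_lt (x y : R) : 0 <= x -> x < y -> cosh x < cosh y.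
Proof.
  intros Hx Hxy.
  assert (0 < sinh ((y + x) / 2)) by (apply sinh_pos; lra).
  assert (0 < sinh ((y - x) / 2)) by (apply sinh_pos; lra).
  assert (0 < cosh y - cosh x) by (rewrite cosh_sub_cosh; nra); lra.
Qed.

Lemma cosh_Rabs (x : R) : cosh (Rabs x) = cosh x.
Proof. unfold Rabs; destruct (Rcase_abs x); [apply cosh_opp | reflexivity]. Qed.

Lemma cosh_pos (x : R) : 0 < cosh x.
Proof.
  rewrite <- cosh_Rabs.
  destruct (Rle_lt_or_eq_dec 0 (Rabs x) (Rabs_pos x)) as [Hpos | <-].
  - assert (cosh 0 < cosh (Rabs x)) by (apply cosh_lt; lra).
    rewrite cosh_0 in *; lra.
  - rewrite cosh_0; lra.
Qed.

Lemma cosh_inj (x y : R) : 0 <= x -> 0 <= y -> cosh x = cosh y -> x = y.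
Proof.
  intros Hx Hy Hxy; destruct (Rtotal_order x y) as [Hlt | [Heq | Hgt]].
  - apply cosh_lt in Hlt; lra.
  - exact Heq.
  - apply cosh_lt in Hgt; lra.
Qed.

Lemma cosh_sqr_inj (x y : R) : 0 <= x -> 0 <= y -> cosh x ^ 2 = cosh y ^ 2 -> x = y.
Proof.
  intros Hx Hy Hxy; apply cosh_inj; [exact Hx | exact Hy |].
  assert (Px := cosh_pos x); assert (Py := cosh_pos y); nra.
Qed.

Lemma Rabs_div_2 (x : R) : Rabs (x / 2) = Rabs x / 2.
Proof. unfold Rabs; destruct (Rcase_abs (x / 2)), (Rcase_abs x); lra. Qed.

Lemma is_pseudo_angle_iff (x y : vec) (d : R) :
  (timelike x /\ timelike y) \/ (spacelike x /\ spacelike y) ->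
  (mdot x y) ^ 2 / (mdot x x * mdot y y) = cosh d ^ 2 ->
  forall theta, is_pseudo_angle x y theta <-> theta = Rabs d.
Proof.
  intros Hcausal Hratio theta; unfold is_pseudo_angle; rewrite Hratio, <- (cosh_Rabs d).
  split.
  - intros (_ & Htheta & Hcosh); exact (cosh_sqr_inj _ _ Htheta (Rabs_pos d) Hcosh).
  - intros ->; repeat split; [exact Hcausal | apply Rabs_pos].
Qed.

Lemma vsub_origin (p : vec) : vsub p origin = p.
Proof. destruct p as [p0 p1]; unfold vsub, origin; simpl; f_equal; ring. Qed.

Lemma mdot_hpt (a b : R) : mdot (hpt a) (hpt b) = cosh (a - b).
Proof. unfold mdot, hpt; simpl; rewrite cosh_minus; ring. Qed.

Lemma hpt_spacelike (a : R) : spacelike (hpt a).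
Proof. unfold spacelike; rewrite mdot_hpt, Rminus_diag, cosh_0; lra. Qed.

Lemma mdot_hpt_ratio (a b : R) :
  (mdot (hpt a) (hpt b)) ^ 2 / (mdot (hpt a) (hpt a) * mdot (hpt b) (hpt b))
  = cosh (a - b) ^ 2.
Proof. rewrite !mdot_hpt, !Rminus_diag, cosh_0; field. Qed.

Lemma mdot_hpt_chords (a b c : R) :
  mdot (vsub (hpt a) (hpt c)) (vsub (hpt b) (hpt c))
  = -4 * sinh ((a - c) / 2) * sinh ((b - c) / 2) * cosh ((a - b) / 2).
Proof.
  unfold mdot, vsub, hpt; simpl; rewrite !sinh_sub_sinh, !cosh_sub_cosh.
  replace ((a - b) / 2) with ((a + c) / 2 - (b + c) / 2) by field.
  rewrite cosh_minus; ring.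
Qed.

Lemma hpt_chord_timelike (a c : R) : c <> a -> timelike (vsub (hpt a) (hpt c)).
Proof.
  intros Hca; unfold timelike; rewrite mdot_hpt_chords, Rminus_diag.
  replace (0 / 2) with 0 by field; rewrite cosh_0.
  assert (sinh ((a - c) / 2) <> 0) by (apply sinh_neq_0; lra).
  assert (0 < sinh ((a - c) / 2) * sinh ((a - c) / 2))
    by (apply Rsqr_pos_lt; assumption).
  lra.
Qed.

Lemma mdot_hpt_chords_ratio (a b c : R) : c <> a -> c <> b ->
  let u := vsub (hpt a) (hpt c) in
  let v := vsub (hpt b) (hpt c) in
  (mdot u v) ^ 2 / (mdot u u * mdot v v) = cosh ((a - b) / 2) ^ 2.
Proof.
  intros Hca Hcb u v; unfold u, v; rewrite !mdot_hpt_chords, !Rminus_diag.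
  replace (0 / 2) with 0 by field; rewrite cosh_0.
  assert (sinh ((a - c) / 2) <> 0) by (apply sinh_neq_0; lra).
  assert (sinh ((b - c) / 2) <> 0) by (apply sinh_neq_0; lra).
  field; split; assumption.
Qed.

Lemma is_pseudo_angle_hpt_chords (a b c : R) : c <> a -> c <> b ->
  forall phi, is_pseudo_angle (vsub (hpt a) (hpt c)) (vsub (hpt b) (hpt c)) phi
              <-> phi = Rabs (a - b) / 2.
Proof.
  intros Hca Hcb phi; rewrite <- Rabs_div_2.
  apply is_pseudo_angle_iff; [| exact (mdot_hpt_chords_ratio a b c Hca Hcb)].
  left; split; apply hpt_chord_timelike; assumption.
Qed.

Theorem mainTheorem2 (theta1 theta2 : R) :
  let OP1 := vsub (hpt theta1) origin in
  let OP2 := vsub (hpt theta2) origin in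
  spacelike OP1 /\ spacelike OP2 /\
  (mdot OP1 OP2) ^ 2 / (mdot OP1 OP1 * mdot OP2 OP2) = (cosh (theta1 - theta2)) ^ 2 /\
  (forall Theta, is_pseudo_angle OP1 OP2 Theta <-> Theta = Rabs (theta1 - theta2)) /\
  (forall theta0 : R, theta0 <> theta1 -> theta0 <> theta2 ->
     forall Theta phi,
       is_pseudo_angle OP1 OP2 Theta ->
       is_pseudo_angle (vsub (hpt theta1) (hpt theta0))
                       (vsub (hpt theta2) (hpt theta0)) phi ->
       Theta = 2 * phi /\ phi = Rabs (theta1 - theta2) / 2) /\
  (forall theta0 : R, theta0 <> theta1 -> theta0 <> theta2 ->
     is_pseudo_angle (vsub (hpt theta1) (hpt theta0))
                     (vsub (hpt theta2) (hpt theta0)) (Rabs (theta1 - theta2) / 2)).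
Proof.
  intros OP1 OP2; unfold OP1, OP2; rewrite !vsub_origin.
  pose proof (mdot_hpt_ratio theta1 theta2) as Hratio.
  assert (Hangle : forall Theta,
            is_pseudo_angle (hpt theta1) (hpt theta2) Theta
            <-> Theta = Rabs (theta1 - theta2)).
  { apply is_pseudo_angle_iff; [right; split; apply hpt_spacelike | exact Hratio]. }
  split; [apply hpt_spacelike |]; split; [apply hpt_spacelike |].
  split; [exact Hratio |]; split; [exact Hangle |]; split.
  - intros theta0 H01 H02 Theta phi HTheta Hphi.
    apply Hangle in HTheta; apply (is_pseudo_angle_hpt_chords _ _ _ H01 H02) in Hphi.
    split; lra.
  - intros theta0 H01 H02; now apply is_pseudo_angle_hpt_chords.
Qed.
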